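(* Let $A=\{a_1,\dots,a_k\}$ be finite and $u_1,u_2:A\to\mathbb{R}$. Consider the following perfect-information game: (1) player 1 proposes $\alpha\in\mathbb{R}$; (2) player 2, observing $\alpha$, decides whether to be the chooser (player 1 then being the proposer) or the proposer (player 1 then being the chooser); (3) the proposer chooses a price vector $p\in P_\alpha=\{p\in\mathbb{R}^k:\sum_j p_j=\alpha\}$; (4) the chooser, observing $p$, selects an option $a_j\in A$ and pays $p_j$ to the proposer. Payoffs are quasi-linear: $u_i(a_j)+t_i$ where $t_i$ is the net transfer received. Then in every (pure) subgame-perfect Nash equilibrium, $\alpha=\frac{k}{2}\bigl(\mathrm{Avg}_1+\mathrm{Avg}_2-\max(u)\bigr)$, the selected option is efficient, and the equilibrium payoffs of players 1 and 2 are $\frac12\max(u)-\frac12(\mathrm{Avg}_2-\mathrm{Avg}_1)$ and $\frac12\max(u)+\frac12(\mathrm{Avg}_2-\mathrm{Avg}_1)$ respectively.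
   Context: $\mathrm{Avg}_i=\frac1k\sum_j u_i(a_j)$, $\max(u)=\max_{a\in A}(u_1(a)+u_2(a))$; an option is efficient if it attains $\max(u)$. Subgame-perfect Nash equilibrium: a profile of pure strategies (player 1: $\alpha$, and, depending on roles, price choices as functions of the history and option choices as functions of the history) such that in every subgame the continuation strategies are mutually best responses. *)

(* Reals are modelled by an arbitrary realFieldType R
   (the statement is purely algebraic/order-theoretic). *)
From HB Require Import structures.
From mathcomp Require Import all_boot all_order all_algebra.
Set Implicit Arguments. Unset Strict Implicit. Unset Printing Implicit Defensive.
Import Order.TTheory GRing.Theory Num.Theory.
Local Open Scope ring_scope.

Section Game.
Variables (R : realFieldType) (A : finType).

(* max_{a in A} f a  (A is assumed nonempty where used; 0 otherwise) *)
Definition maxA (f : A -> R) : R :=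
  match [pick a : A] with
  | Some a0 => \big[Num.max/f a0]_(a : A) f a
  | None => 0
  end.

Definition avg (f : A -> R) : R := (\sum_(a : A) f a) / (#|A|%:R).

Definition maxu (u1 u2 : A -> R) : R := maxA (fun a => u1 a + u2 a).

Definition efficient (u1 u2 : A -> R) (a : A) : Prop :=
  u1 a + u2 a = maxu u1 u2.

Definition inP (alpha : R) (p : A -> R) : Prop := \sum_(a : A) p a = alpha.

(* Continuation play after alpha has been announced.
   r = true  : player 2 is the chooser, player 1 the proposer (uses p1),
               player 2 chooses with c2;
   r = false : player 2 is the proposer (uses p2), player 1 chooses with c1. *)
Definition selected (r : bool) (p1 : A -> R) (c1 : (A -> R) -> A)
  (p2 : A -> R) (c2 : (A -> R) -> A) : A :=
  if r then c2 p1 else c1 p2.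

Definition payoffs (u1 u2 : A -> R) (r : bool) (p1 : A -> R)
  (c1 : (A -> R) -> A) (p2 : A -> R) (c2 : (A -> R) -> A) : R * R :=
  if r then let a := c2 p1 in (u1 a + p1 a, u2 a - p1 a)
  else let a := c1 p2 in (u1 a - p2 a, u2 a + p2 a).

(* A pure strategy profile:
   - player 1: alpha : R; pr1 : R -> (A -> R) (price vector proposed after
     alpha was announced and player 2 chose to be chooser);
     ch1 : R -> (A -> R) -> A (option chosen after alpha, player 2 chose to
     be proposer, and price vector p was proposed);
   - player 2: role : R -> bool (true = player 2 becomes the chooser);
     pr2 : R -> (A -> R); ch2 : R -> (A -> R) -> A.
   Subgame perfection: in every subgame (the whole game; after any alpha;
   after any alpha and role decision; after any alpha, role and feasible
   price vector) each player's continuation strategy is a best response to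
   the other's, against all alternative continuation strategies. *)
Definition SPNE (u1 u2 : A -> R) (alpha : R) (role : R -> bool)
  (pr1 pr2 : R -> A -> R) (ch1 ch2 : R -> (A -> R) -> A) : Prop :=
  (forall x, inP x (pr1 x)) /\ (forall x, inP x (pr2 x)) /\
  (* subgames at the choice node: history (x, role, p) with p in P_x *)
  (forall x p, inP x p -> forall a : A,
      u2 a - p a <= u2 (ch2 x p) - p (ch2 x p) /\
      u1 a - p a <= u1 (ch1 x p) - p (ch1 x p)) /\
  (* subgames at the pricing node, history (x, player 2 is chooser) *)
  (forall x,
      (forall p1', inP x p1' ->
         (payoffs u1 u2 true p1' (ch1 x) (pr2 x) (ch2 x)).1
           <= (payoffs u1 u2 true (pr1 x) (ch1 x) (pr2 x) (ch2 x)).1) /\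
      (forall c2' : (A -> R) -> A,
         (payoffs u1 u2 true (pr1 x) (ch1 x) (pr2 x) c2').2
           <= (payoffs u1 u2 true (pr1 x) (ch1 x) (pr2 x) (ch2 x)).2)) /\
  (* subgames at the pricing node, history (x, player 2 is proposer) *)
  (forall x,
      (forall p2', inP x p2' ->
         (payoffs u1 u2 false (pr1 x) (ch1 x) p2' (ch2 x)).2
           <= (payoffs u1 u2 false (pr1 x) (ch1 x) (pr2 x) (ch2 x)).2) /\
      (forall c1' : (A -> R) -> A,
         (payoffs u1 u2 false (pr1 x) c1' (pr2 x) (ch2 x)).1
           <= (payoffs u1 u2 false (pr1 x) (ch1 x) (pr2 x) (ch2 x)).1)) /\
  (* subgames after alpha = x was proposed *)
  (forall x,
      (forall (p1' : A -> R) (c1' : (A -> R) -> A), inP x p1' ->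
         (payoffs u1 u2 (role x) p1' c1' (pr2 x) (ch2 x)).1
           <= (payoffs u1 u2 (role x) (pr1 x) (ch1 x) (pr2 x) (ch2 x)).1) /\
      (forall (r' : bool) (p2' : A -> R) (c2' : (A -> R) -> A), inP x p2' ->
         (payoffs u1 u2 r' (pr1 x) (ch1 x) p2' c2').2
           <= (payoffs u1 u2 (role x) (pr1 x) (ch1 x) (pr2 x) (ch2 x)).2)) /\
  (* the whole game *)
  (forall (alpha' : R) (pr1' : R -> A -> R) (ch1' : R -> (A -> R) -> A),
      (forall x, inP x (pr1' x)) ->
      (payoffs u1 u2 (role alpha') (pr1' alpha') (ch1' alpha')
               (pr2 alpha') (ch2 alpha')).1
        <= (payoffs u1 u2 (role alpha) (pr1 alpha) (ch1 alpha)
               (pr2 alpha) (ch2 alpha)).1) /\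
  (forall (role' : R -> bool) (pr2' : R -> A -> R) (ch2' : R -> (A -> R) -> A),
      (forall x, inP x (pr2' x)) ->
      (payoffs u1 u2 (role' alpha) (pr1 alpha) (ch1 alpha)
               (pr2' alpha) (ch2' alpha)).2
        <= (payoffs u1 u2 (role alpha) (pr1 alpha) (ch1 alpha)
               (pr2 alpha) (ch2 alpha)).2).

End Game.

From Pilot Require Import Defs.
From HB Require Import structures.
From mathcomp Require Import all_boot all_order all_algebra.
From mathcomp Require Import ring lra.
Import Order.TTheory GRing.Theory Num.Theory.
Set Implicit Arguments. Unset Strict Implicit.
Local Open Scope ring_scope.

(* Once the sum x of the prices is fixed, the chooser (valuation u) can secure
   the average net value Avg(u) - x/k of the options, and an optimal proposer
   leaves him exactly that: pricing every option at the chooser's value, with a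
   small discount on an efficient option, extracts all the remaining surplus
   max(u) - (Avg(u) - x/k).  Player 2 therefore takes the better of the two
   roles, i.e. the maximum of a decreasing and an increasing affine function
   of x, and player 1, who receives max(u) minus that, must announce the point
   where the two lines cross. *)

(* [maxA] alone would resolve to the associativity lemma of [Order.max]. *)
Section MaxA.
Variables (R : realFieldType) (A : finType).
Implicit Types f : A -> R.

Lemma maxA_ge f a : f a <= Defs.maxA f.
Proof. by rewrite /Defs.maxA; case: pickP => [a0 _|/(_ a)//]; exact: le_bigmax. Qed.

Lemma maxA_eq_arg (a0 : A) f : Defs.maxA f = f [arg max_(a > a0) f a]%O.
Proof.
rewrite /Defs.maxA; case: pickP => [b _|/(_ a0)//].
case: arg_maxP => // c _ fc_max.
apply/eqP; rewrite eq_le le_bigmax andbT.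
by apply/bigmax_leP; split=> [|a _]; exact: fc_max.
Qed.

Lemma maxuC (u v : A -> R) : maxu u v = maxu v u.
Proof.
rewrite /maxu /Defs.maxA; case: pickP => // a _.
by rewrite [u a + _]addrC; apply: eq_bigr => b _; rewrite addrC.
Qed.

End MaxA.

Lemma payoffs_sum (R : realFieldType) (A : finType) (u1 u2 : A -> R) r p1 c1 p2 c2 :
  (payoffs u1 u2 r p1 c1 p2 c2).1 + (payoffs u1 u2 r p1 c1 p2 c2).2
  = u1 (selected r p1 c1 p2 c2) + u2 (selected r p1 c1 p2 c2).
Proof. by case: r => /=; ring. Qed.

Lemma max_crossing_eq (R : realFieldType) (k a b x y : R) : 0 < k ->
  a - y / k = b + y / k ->
  Num.max (a - x / k) (b + x / k) <= Num.max (a - y / k) (b + y / k) -> x = y.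
Proof.
move=> k_gt0 cross; rewrite -cross maxxx ge_max => /andP[le1 le2].
have xy : x / k = y / k by lra.
by move/(congr1 ( *%R^~ k)): xy; rewrite !divfK ?gt_eqF.
Qed.

Section Pricing.
Variables (R : realFieldType) (A : finType).

Definition chooser_value (u : A -> R) (x : R) : R := avg u - x / #|A|%:R.

Hypothesis A_gt0 : (0 < #|A|)%N.
Variables (u v : A -> R) (x : R) (ch : (A -> R) -> A).
Hypothesis ch_best :
  forall p, inP x p -> forall a, u a - p a <= u (ch p) - p (ch p).

Let k_gt0 : 0 < #|A|%:R :> R. Proof. by rewrite ltr0n. Qed.

(* The best option is at least as good as the average one. *)
Lemma chooser_value_le p : inP x p -> chooser_value u x <= u (ch p) - p (ch p).
Proof.
move=> px; rewrite /chooser_value /avg -mulrBl -px -sumrB ler_pdivrMr //.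
by rewrite mulr_natr -sumr_const; apply: ler_sum => a _; exact: ch_best.
Qed.

Lemma proposer_payoff_le p :
  inP x p -> v (ch p) + p (ch p) <= maxu u v - chooser_value u x.
Proof.
move=> px; have := chooser_value_le px.
have := maxA_ge (fun a => u a + v a) (ch p); rewrite -/(maxu u v); lra.
Qed.

Lemma proposer_payoff_approx e : 0 < e ->
  exists2 p, inP x p & maxu u v - chooser_value u x <= v (ch p) + p (ch p) + e.
Proof.
move=> e_gt0; have [a0 _] := card_gt0P A_gt0.
set b := [arg max_(a > a0) u a + v a]%O; set c := chooser_value u x.
set k : R := #|A|%:R.
pose p a := u a - c + e / k - (if a == b then e else 0).
have px : inP x p.
  rewrite /inP /p sumrB big_split sumrB /= -big_mkcond big_pred1_eq !sumr_const.
  rewrite -[c *+ _]mulr_natr -[e / k *+ _]mulr_natr -/k.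
  rewrite /c /chooser_value /avg -/k mulrBl !divfK ?gt_eqF //; lra.
have ch_b : ch p = b.
  apply/eqP/negPn/negP => ch_nb; have := ch_best px b.
  by rewrite /p eqxx (negbTE ch_nb); lra.
exists p => //; rewrite ch_b /p eqxx /maxu (maxA_eq_arg a0) -/b.
have : 0 <= e / k by rewrite divr_ge0 ?ltW.
lra.
Qed.

Section OptimalPrice.
Variable p0 : A -> R.
Hypotheses (p0x : inP x p0)
  (p0_opt : forall p, inP x p -> v (ch p) + p (ch p) <= v (ch p0) + p0 (ch p0)).

Lemma proposer_payoff_opt :
  v (ch p0) + p0 (ch p0) = maxu u v - chooser_value u x.
Proof.
apply/eqP; rewrite eq_le proposer_payoff_le //=; apply/ler_addgt0Pr => e e_gt0.
have [p px le_p] := proposer_payoff_approx e_gt0.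
by apply: le_trans le_p _; rewrite lerD2r; exact: p0_opt.
Qed.

Lemma chooser_payoff_opt : u (ch p0) - p0 (ch p0) = chooser_value u x.
Proof.
have := chooser_value_le p0x; have := proposer_payoff_opt.
have := maxA_ge (fun a => u a + v a) (ch p0); rewrite -/(maxu u v); lra.
Qed.

End OptimalPrice.
End Pricing.

Definition crossing_price (R : realFieldType) (A : finType) (u1 u2 : A -> R) : R :=
  #|A|%:R / 2 * (avg u1 + avg u2 - maxu u1 u2).

Section Equilibrium.
Variables (R : realFieldType) (A : finType) (u1 u2 : A -> R) (alpha : R).
Variables (role : R -> bool) (pr1 pr2 : R -> A -> R) (ch1 ch2 : R -> (A -> R) -> A).
Hypotheses (A_gt0 : (0 < #|A|)%N) (spne : SPNE u1 u2 alpha role pr1 pr2 ch1 ch2).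

Local Notation payoff x := (payoffs u1 u2 (role x) (pr1 x) (ch1 x) (pr2 x) (ch2 x)).

Lemma payoffs_player2_chooser x :
  payoffs u1 u2 true (pr1 x) (ch1 x) (pr2 x) (ch2 x)
  = (maxu u1 u2 - chooser_value u2 x, chooser_value u2 x).
Proof.
have [pr1P [_ [chP [pricing1 _]]]] := spne.
have ch2_best p px a := (chP x p px a).1.
have pr1_opt p : inP x p -> u1 (ch2 x p) + p (ch2 x p)
    <= u1 (ch2 x (pr1 x)) + pr1 x (ch2 x (pr1 x)).
  exact: (pricing1 x).1.
rewrite /= (proposer_payoff_opt A_gt0 ch2_best (pr1P x) pr1_opt).
by rewrite (chooser_payoff_opt A_gt0 ch2_best (pr1P x) pr1_opt) maxuC.
Qed.

Lemma payoffs_player2_proposer x :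
  payoffs u1 u2 false (pr1 x) (ch1 x) (pr2 x) (ch2 x)
  = (chooser_value u1 x, maxu u1 u2 - chooser_value u1 x).
Proof.
have [_ [pr2P [chP [_ [pricing2 _]]]]] := spne.
have ch1_best p px a := (chP x p px a).2.
have pr2_opt p : inP x p -> u2 (ch1 x p) + p (ch1 x p)
    <= u2 (ch1 x (pr2 x)) + pr2 x (ch1 x (pr2 x)).
  exact: (pricing2 x).1.
rewrite /= (proposer_payoff_opt A_gt0 ch1_best (pr2P x) pr2_opt).
by rewrite (chooser_payoff_opt A_gt0 ch1_best (pr2P x) pr2_opt).
Qed.

Lemma continuation_payoff_sum x : (payoff x).1 + (payoff x).2 = maxu u1 u2.
Proof.
by case: (role x); rewrite ?payoffs_player2_chooser ?payoffs_player2_proposer /=; ring.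
Qed.

Lemma continuation_payoff2 x :
  (payoff x).2 = Num.max (chooser_value u2 x) (maxu u1 u2 - chooser_value u1 x).
Proof.
have [_ [pr2P [_ [_ [_ [role_opt _]]]]]] := spne.
have le_role r := (role_opt x).2 r (pr2 x) (ch2 x) (pr2P x).
move: (le_role true) (le_role false).
rewrite payoffs_player2_chooser payoffs_player2_proposer /= => le_t le_f.
apply/eqP; rewrite eq_le ge_max le_t le_f andbT.
by case: (role x); rewrite ?payoffs_player2_chooser ?payoffs_player2_proposer /= le_max lexx ?orbT.
Qed.

Lemma alpha_eq_crossing : alpha = crossing_price u1 u2.
Proof.
have [pr1P [_ [_ [_ [_ [_ [alpha_opt _]]]]]]] := spne.
have k_gt0 : 0 < #|A|%:R :> R by rewrite ltr0n.
have le_alpha := alpha_opt (crossing_price u1 u2) pr1 ch1 pr1P.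
have : (payoff alpha).2 <= (payoff (crossing_price u1 u2)).2.
  by move: le_alpha (continuation_payoff_sum alpha)
     (continuation_payoff_sum (crossing_price u1 u2)); lra.
have shift y : maxu u1 u2 - (avg u1 - y / #|A|%:R)
              = maxu u1 u2 - avg u1 + y / #|A|%:R by ring.
rewrite !continuation_payoff2 /chooser_value !shift.
apply: max_crossing_eq k_gt0 _.
by rewrite /crossing_price; field; rewrite pnatr_eq0 -lt0n.
Qed.

Lemma equilibrium_payoff2 :
  (payoff alpha).2 = maxu u1 u2 / 2 + (avg u2 - avg u1) / 2.
Proof.
have kn0 : #|A|%:R != 0 :> R by rewrite pnatr_eq0 -lt0n.
rewrite continuation_payoff2 alpha_eq_crossing /chooser_value /crossing_price.
have -> : maxu u1 u2 - (avg u1 - #|A|%:R / 2 * (avg u1 + avg u2 - maxu u1 u2) / #|A|%:R)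
        = avg u2 - #|A|%:R / 2 * (avg u1 + avg u2 - maxu u1 u2) / #|A|%:R.
  by field.
by rewrite maxxx; field.
Qed.

End Equilibrium.

Theorem mainTheorem5 (R : realFieldType) (A : finType) (u1 u2 : A -> R)
  (alpha : R) (role : R -> bool) (pr1 pr2 : R -> A -> R)
  (ch1 ch2 : R -> (A -> R) -> A) :
  (0 < #|A|)%N ->
  SPNE u1 u2 alpha role pr1 pr2 ch1 ch2 ->
  [/\ alpha = (#|A|%:R / 2) * (avg u1 + avg u2 - maxu u1 u2),
      efficient u1 u2
        (selected (role alpha) (pr1 alpha) (ch1 alpha) (pr2 alpha) (ch2 alpha)),
      (payoffs u1 u2 (role alpha) (pr1 alpha) (ch1 alpha) (pr2 alpha)
         (ch2 alpha)).1
        = maxu u1 u2 / 2 - (avg u2 - avg u1) / 2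
    & (payoffs u1 u2 (role alpha) (pr1 alpha) (ch1 alpha) (pr2 alpha)
         (ch2 alpha)).2
        = maxu u1 u2 / 2 + (avg u2 - avg u1) / 2].
Proof.
move=> A_gt0 spne.
have sum_eq := continuation_payoff_sum A_gt0 spne alpha.
have payoff2_eq := equilibrium_payoff2 A_gt0 spne.
split.
- exact: alpha_eq_crossing A_gt0 spne.
- by rewrite /efficient -payoffs_sum; exact: sum_eq.
- by move: sum_eq; rewrite payoff2_eq; lra.
- exact: payoff2_eq.
Qed.
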